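(* If $G$ and $H$ are connected graphs, then $\mathrm{gp}(G\boxtimes H)\ge \mathrm{gp}(G)\,\mathrm{gp}(H)$.
   Context: All graphs are finite and simple. The strong product $G\boxtimes H$ has vertex set $V(G)\times V(H)$, with distinct $(g,h),(g',h')$ adjacent iff ($g=g'$ or $gg'\in E(G)$) and ($h=h'$ or $hh'\in E(H)$). For a connected graph $G$, a set $S\subseteq V(G)$ is a general position set if no three pairwise distinct vertices of $S$ lie on a common geodesic (shortest path); $\mathrm{gp}(G)$ is the maximum cardinality of a general position set. *)

From mathcomp Require Import all_boot.
From mathcomp Require Import boolp.
Set Implicit Arguments. Unset Strict Implicit. Unset Printing Implicit Defensive.

Definition simple_graph (T : finType) (e : rel T) : Prop :=
  symmetric e /\ irreflexive e.

Definition connected_graph (T : finType) (e : rel T) : Prop :=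
  forall x y : T, connect e x y.

(* A walk is given by its start x and the rest p (vertex list x :: p),
   with consecutive vertices adjacent; its length is size p.
   It is a geodesic (shortest path) if no walk with the same endpoints is
   shorter. *)
Definition geodesic (T : finType) (e : rel T) (x : T) (p : seq T) : Prop :=
  path e x p /\
  forall q : seq T, path e x q -> last x q = last x p -> size p <= size q.

Definition gp_set (T : finType) (e : rel T) (S : {set T}) : Prop :=
  forall u v w : T, u \in S -> v \in S -> w \in S ->
    u != v -> v != w -> u != w ->
    ~ (exists (x : T) (p : seq T),
         geodesic e x p /\ u \in x :: p /\ v \in x :: p /\ w \in x :: p).

Definition gp (T : finType) (e : rel T) : nat :=
  \max_(S : {set T} | `[< gp_set e S >]) #|S|.

Definition strong_prod (T1 T2 : finType) (e1 : rel T1) (e2 : rel T2)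
  : rel (T1 * T2)%type :=
  fun x y => [&& x != y,
                 (x.1 == y.1) || e1 x.1 y.1 &
                 (x.2 == y.2) || e2 x.2 y.2].

From mathcomp Require Import all_boot.
From mathcomp Require Import boolp zify.
Set Implicit Arguments. Unset Strict Implicit. Unset Printing Implicit Defensive.

(* In a connected graph, S is in general position iff no three distinct
   u, v, w in S satisfy d(u,w) = d(u,v) + d(v,w): a geodesic through three
   vertices meets them in some order, and the middle one splits the distance.
   Distances in the strong product are maxima of coordinate distances.  If
   distinct vertices a, b, c of S1 x S2 satisfied d(a,c) = d(a,b) + d(b,c),
   then in the coordinate realizing d(a,c) the same identity would hold with
   both summands also realizing their maxima; general position of that factor
   then forces two of a, b, c to coincide.  Hence S1 x S2 is in general
   position whenever S1 and S2 are. *)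

Section Distance.
Variables (T : finType) (e : rel T).
Hypothesis e_connected : connected_graph e.

Definition walk_of_size (x y : T) (n : nat) : Prop :=
  exists p, [/\ path e x p, last x p = y & size p = n].

(* The [0] branch is never taken, since [e] is connected. *)
Definition dist (x y : T) : nat :=
  if pselect (exists n, `[< walk_of_size x y n >]) is left ex then ex_minn ex
  else 0.

Lemma dist_spec x y :
  walk_of_size x y (dist x y) /\ forall n, walk_of_size x y n -> dist x y <= n.
Proof.
have ex : exists n, `[< walk_of_size x y n >].
  have /connectP [p p_path ->] := e_connected x y.
  by exists (size p); apply/asboolP; exists p.
rewrite /dist; case: pselect => [ex'|//]; case: ex_minnP => m /asboolP m_walk m_min.
by split=> // n n_walk; apply/m_min/asboolP.
Qed.

Lemma dist_walk x y : exists p, [/\ path e x p, last x p = y & size p = dist x y].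
Proof. exact: (dist_spec x y).1. Qed.

Lemma dist_path_le x p : path e x p -> dist x (last x p) <= size p.
Proof. by move=> p_path; apply: (dist_spec _ _).2; exists p. Qed.

Lemma dist_eq0 x y : (dist x y == 0) = (x == y).
Proof.
apply/eqP/eqP => [d0|->]; last by apply/eqP; rewrite -leqn0 (@dist_path_le y [::]).
have [p [_ last_p]] := dist_walk x y; rewrite d0 -last_p.
by case: p {last_p}.
Qed.

Lemma dist_xx x : dist x x = 0.
Proof. by apply/eqP; rewrite dist_eq0. Qed.

Lemma dist_triangle x y z : dist x z <= dist x y + dist y z.
Proof.
have [p [p_path <- <-]] := dist_walk x y; have [q [q_path <- <-]] := dist_walk (last x p) z.
by rewrite -size_cat -last_cat dist_path_le // cat_path p_path.
Qed.

Lemma dist_le1 x y : (x == y) || e x y -> dist x y <= 1.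
Proof.
case/orP => [/eqP->|exy]; first by rewrite dist_xx.
by have := @dist_path_le x [:: y]; rewrite /= exy; apply.
Qed.

Lemma dist_step x y :
  exists z, ((x == z) || e x z) /\ dist z y = (dist x y).-1.
Proof.
have [<-|xy] := eqVneq x y; first by exists x; rewrite eqxx dist_xx.
have [[|z p] [p_path last_p size_p]] := dist_walk x y.
  by rewrite -last_p eqxx in xy.
move: p_path => /= /andP [exz z_path]; exists z; rewrite exz orbT; split=> //.
have z_le := dist_path_le z_path; rewrite /= in last_p size_p; rewrite last_p in z_le.
have := dist_triangle x z y; have := @dist_le1 x z; rewrite exz orbT; lia.
Qed.

Lemma geodesicP x p :
  geodesic e x p <-> path e x p /\ size p = dist x (last x p).
Proof.
split=> [[p_path p_min]|[p_path size_p]].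
  split=> //; apply/eqP; rewrite eqn_leq dist_path_le // andbT.
  have [q [q_path q_last <-]] := dist_walk x (last x p); exact: p_min.
by split=> // q q_path q_last; rewrite size_p -q_last dist_path_le.
Qed.

Lemma dist_nth_le x p i j : path e x p -> i <= j -> j <= size p ->
  dist (nth x (x :: p) i) (nth x (x :: p) j) <= j - i.
Proof.
move=> p_path; elim: j => [|j IH] ij jp.
  by move: ij; rewrite leqn0 => /eqP->; rewrite dist_xx.
case: (ltngtP i j.+1) ij => // [ij _|-> _]; last by rewrite dist_xx.
have step : dist (nth x (x :: p) j) (nth x (x :: p) j.+1) <= 1.
  by apply: dist_le1; rewrite /= (pathP x p_path) ?orbT.
have := dist_triangle (nth x (x :: p) i) (nth x (x :: p) j) (nth x (x :: p) j.+1).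
have := IH ij (ltnW jp); lia.
Qed.

Lemma geodesic_nth_dist x p i k : geodesic e x p -> i <= k -> k <= size p ->
  dist (nth x (x :: p) i) (nth x (x :: p) k) = k - i.
Proof.
(* With [n := size p]: [n = d(p_0, p_n) <= d(p_0, p_i) + d(p_i, p_k) + d(p_k, p_n)],
   and these three distances are at most [i], [k - i] and [n - k]. *)
move=> /geodesicP [p_path size_p] ik kp.
have last_p : last x p = nth x (x :: p) (size p) by rewrite (nth_last x (x :: p)).
rewrite last_p in size_p.
have := dist_triangle x (nth x (x :: p) i) (nth x (x :: p) (size p)).
have := dist_triangle (nth x (x :: p) i) (nth x (x :: p) k) (nth x (x :: p) (size p)).
have := dist_nth_le p_path (leq0n i) (leq_trans ik kp).
have := dist_nth_le p_path kp (leqnn _).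
have := dist_nth_le p_path ik kp.
rewrite /= in size_p *; lia.
Qed.

Lemma geodesic_between x p a b c : geodesic e x p ->
  a \in x :: p -> b \in x :: p -> c \in x :: p ->
  index a (x :: p) <= index b (x :: p) <= index c (x :: p) ->
  dist a c = dist a b + dist b c.
Proof.
move=> g a_p b_p c_p /andP [ab bc].
have c_le : index c (x :: p) <= size p by rewrite -ltnS index_mem.
have b_le := leq_trans bc c_le.
rewrite -(nth_index x a_p) -(nth_index x b_p) -(nth_index x c_p).
rewrite !(geodesic_nth_dist g) ?(leq_trans ab) //; lia.
Qed.

Lemma gp_setP (S : {set T}) : gp_set e S <->
  (forall u v w, u \in S -> v \in S -> w \in S -> u != v -> v != w -> u != w ->
     dist u w != dist u v + dist v w).
Proof.
split=> [gpS u v w uS vS wS uv vw uw|no_split u v w uS vS wS uv vw uw].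
  apply/eqP => split_uw; apply: (gpS u v w) => //.
  have [p [p_path last_p size_p]] := dist_walk u v.
  have [q [q_path last_q size_q]] := dist_walk v w.
  exists u, (p ++ q); split; last split; last split.
  - apply/geodesicP; rewrite cat_path last_cat last_p p_path last_q q_path.
    by rewrite size_cat size_p size_q split_uw.
  - exact: mem_head.
  - by rewrite -cat_cons mem_cat -last_p mem_last.
  - by rewrite -last_q -last_p -last_cat mem_last.
case=> x [p [g [u_p [v_p w_p]]]]; set s := x :: p in u_p v_p w_p.
wlog uw_idx : u w uS wS uv vw uw u_p w_p / index u s <= index w s => [wlog_uw|].
  case: (leqP (index u s) (index w s)) => [|/ltnW]; first exact: wlog_uw.
  by apply: (wlog_uw w u); rewrite // eq_sym.
have [vu wv] : v != u /\ w != v by split; rewrite eq_sym.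
case: (ltnP (index v s) (index u s)) => [/ltnW vu_idx|uv_idx].
  apply: (elimN eqP (no_split v u w vS uS wS vu uw vw)).
  by apply: (geodesic_between g v_p u_p w_p); rewrite vu_idx.
case: (ltnP (index w s) (index v s)) => [/ltnW wv_idx|vw_idx].
  apply: (elimN eqP (no_split u w v uS wS vS uw wv uv)).
  by apply: (geodesic_between g u_p w_p v_p); rewrite uw_idx.
apply: (elimN eqP (no_split u v w uS vS wS uv vw uw)).
by apply: (geodesic_between g u_p v_p w_p); rewrite uv_idx.
Qed.

Lemma gp_set_maxn_split (S : {set T}) u v w a b c : gp_set e S ->
  u \in S -> v \in S -> w \in S -> c <= dist u w ->
  maxn (dist u w) c = maxn (dist u v) a + maxn (dist v w) b ->
  maxn (dist u v) a = 0 \/ maxn (dist v w) b = 0.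
Proof.
move=> /gp_setP no_split uS vS wS c_le split_max.
have triangle := dist_triangle u v w.
have [uv_eq|uv] := eqVneq u v; first by subst v; rewrite dist_xx in split_max *; lia.
have [vw_eq|vw] := eqVneq v w; first by subst w; rewrite dist_xx in split_max *; lia.
have [uw_eq|uw] := eqVneq u w; first by subst w; rewrite dist_xx in split_max c_le; lia.
have split_uw : dist u w = dist u v + dist v w by lia.
by move: (no_split u v w uS vS wS uv vw uw); rewrite split_uw eqxx.
Qed.

End Distance.

Lemma dist_path_map_le (T U : finType) (e : rel T) (f : rel U) (h : U -> T) :
  connected_graph e -> {homo h : x y / f x y >-> (x == y) || e x y} ->
  forall x q, path f x q -> dist e (h x) (h (last x q)) <= size q.
Proof.
move=> e_connected h_homo x q; elim: q x => [|y q IH] x /=; first by rewrite dist_xx.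
case/andP=> fxy y_path; apply: leq_trans (dist_triangle e_connected _ (h y) _) _.
by rewrite -add1n leq_add ?IH ?dist_le1 ?h_homo.
Qed.

Section StrongProduct.
Variables (T1 T2 : finType) (e1 : rel T1) (e2 : rel T2).
Hypotheses (e1_connected : connected_graph e1) (e2_connected : connected_graph e2).
Local Notation d1 := (dist e1).
Local Notation d2 := (dist e2).

Lemma strong_prod_walk n (x y : T1 * T2) : maxn (d1 x.1 y.1) (d2 x.2 y.2) <= n ->
  exists q, [/\ path (strong_prod e1 e2) x q, last x q = y & size q <= n].
Proof.
elim: n x y => [|n IH] [x1 x2] [y1 y2] /= le_n.
  have /eqP-> : x1 == y1 by rewrite -(dist_eq0 e1_connected); lia.
  have /eqP-> : x2 == y2 by rewrite -(dist_eq0 e2_connected); lia.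
  by exists [::].
have [->|xy] := eqVneq (x1, x2) (y1, y2); first by exists [::].
have [z1 [xz1 dz1]] := dist_step e1_connected x1 y1.
have [z2 [xz2 dz2]] := dist_step e2_connected x2 y2.
have le_z : maxn (d1 z1 y1) (d2 z2 y2) <= n by lia.
have [q [q_path q_last q_size]] := IH (z1, z2) (y1, y2) le_z.
exists ((z1, z2) :: q); split=> //=; rewrite q_path /strong_prod /= xz1 xz2 !andbT.
(* In a coordinate where x and y differ the step decreases the distance. *)
apply: contraNneq xy => -[zx1 zx2].
rewrite xpair_eqE -(dist_eq0 e1_connected) -(dist_eq0 e2_connected).
by move: dz1 dz2; rewrite -zx1 -zx2; lia.
Qed.

Lemma connected_strong_prod : connected_graph (strong_prod e1 e2).
Proof.
move=> x y.
have [q [q_path q_last _]] := strong_prod_walk (leqnn (maxn (d1 x.1 y.1) (d2 x.2 y.2))).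
by apply/connectP; exists q; rewrite ?q_last.
Qed.

Lemma dist_strong_prod x y :
  dist (strong_prod e1 e2) x y = maxn (d1 x.1 y.1) (d2 x.2 y.2).
Proof.
apply/eqP; rewrite eqn_leq; apply/andP; split.
  have [q [q_path q_last q_size]] := strong_prod_walk (leqnn (maxn (d1 x.1 y.1) (d2 x.2 y.2))).
  by apply: leq_trans q_size; rewrite -{1}q_last (dist_path_le connected_strong_prod).
have [q [q_path q_last <-]] := dist_walk connected_strong_prod x y.
rewrite geq_max -q_last.
by rewrite !(dist_path_map_le _ _ q_path) // => [u v /and3P []|u v /and3P []].
Qed.

Lemma gp_setX (S1 : {set T1}) (S2 : {set T2}) :
  gp_set e1 S1 -> gp_set e2 S2 -> gp_set (strong_prod e1 e2) (setX S1 S2).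
Proof.
move=> gpS1 gpS2; apply/(gp_setP connected_strong_prod) => -[a1 a2] [b1 b2] [c1 c2].
rewrite !inE /= -!(dist_eq0 connected_strong_prod) !dist_strong_prod /=.
move=> /andP [a1S a2S] /andP [b1S b2S] /andP [c1S c2S] ab bc _; apply/eqP => split_ac.
case: (leqP (d2 a2 c2) (d1 a1 c1)) => [le21|/ltnW le12].
  by have := gp_set_maxn_split e1_connected gpS1 a1S b1S c1S le21 split_ac; lia.
rewrite maxnC (maxnC (d1 a1 b1)) (maxnC (d1 b1 c1)) in split_ac.
by have := gp_set_maxn_split e2_connected gpS2 a2S b2S c2S le12 split_ac; lia.
Qed.

End StrongProduct.

Lemma gp_attained (T : finType) (e : rel T) :
  exists2 S : {set T}, gp_set e S & #|S| = gp e.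
Proof.
have [|S /asboolP gpS gpE] :=
  @eq_bigmax_cond _ [pred S : {set T} | `[< gp_set e S >]] (fun S => #|S|).
  by apply/card_gt0P; exists set0; apply/asboolP => u; rewrite inE.
by exists S; rewrite // -gpE.
Qed.

Theorem theorem4p2 (T1 T2 : finType) (e1 : rel T1) (e2 : rel T2) :
  simple_graph e1 -> simple_graph e2 ->
  connected_graph e1 -> connected_graph e2 ->
  gp e1 * gp e2 <= gp (strong_prod e1 e2).
Proof.
move=> _ _ e1_connected e2_connected.
have [S1 gpS1 <-] := gp_attained e1; have [S2 gpS2 <-] := gp_attained e2.
rewrite -cardsX; apply: (leq_bigmax_cond (setX S1 S2)); apply/asboolP.
exact: gp_setX.
Qed.
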